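(* Let $S$ be a memory system satisfying the Causality assumption, let $n,m,v\ge1$, and let $\Omega$ be a witness for $S(n,m,v)$. For every unambiguous trace $\tau$ of $S(n,m,v)$, every location $1\le i\le m$, and all $r,s,t\in L(\tau,i)$: if $\langle r,s\rangle\in\Omega^e(\tau,i)$, then $\langle r,t\rangle\in\Omega^e(\tau,i)$ or $\langle t,s\rangle\in\Omega^e(\tau,i)$.
   Context: Notation: $\mathbb{N}_n=\{1,\dots,n\}$, $\mathbb{W}_n=\{0,\dots,n\}$. Memory events $E(n,m,v)=\{R,W\}\times\mathbb{N}_n\times\mathbb{N}_m\times\mathbb{W}_v$; for $e=\langle a,b,c,d\rangle$, $op(e)=a$, $proc(e)=b$, $loc(e)=c$, $data(e)=d$; $0$ models the initial value of every location. A memory system is a family $S=(S(n,m,v))_{n,m,v\ge1}$, $S(n,m,v)$ a regular set of finite runs over an alphabet $E^a(n,m,v)\supseteq E(n,m,v)$ (other letters are internal events). The trace of a run is its subsequence of memory events; traces of $S(n,m,v)$ are traces of its runs. For a sequence $\tau$ of memory events: $L(\tau,j)=\{k: loc(\tau(k))=j\}$, $L^w(\tau,j)=\{k\in L(\tau,j): op(\tau(k))=W\}$, $L^r(\tau,j)=\{k\in L(\tau,j): op(\tau(k))=R\}$. A trace $\tau$ is unambiguous if for every location $j$ and $x\in L^w(\tau,j)$, $data(\tau(x))\ne0$ and $data(\tau(x))\ne data(\tau(y))$ for all $y\in L^w(\tau,j)\setminus\{x\}$. Causality assumption: for all $n,m,v\ge1$, every trace $\tau$ of $S(n,m,v)$,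 every location $j$ and every $x\in L^r(\tau,j)$, either $data(\tau(x))=0$ or there is $y\in L^w(\tau,j)$ with $data(\tau(x))=data(\tau(y))$. A witness $\Omega$ for $S(n,m,v)$ assigns to every trace $\tau$ of $S(n,m,v)$ and location $j$ a strict total order $\Omega(\tau,j)$ on $L^w(\tau,j)$. For an unambiguous trace $\tau$, the relation $\Omega^e(\tau,j)\subseteq L(\tau,j)\times L(\tau,j)$ is defined by: $\langle x,y\rangle\in\Omega^e(\tau,j)$ iff (1) $data(\tau(x))=data(\tau(y))$, $op(\tau(x))=W$ and $op(\tau(y))=R$; or (2) $data(\tau(x))=0$ and $data(\tau(y))\ne0$; or (3) there are $a,b\in L^w(\tau,j)$ with $\langle a,b\rangle\in\Omega(\tau,j)$, $data(\tau(a))=data(\tau(x))$ and $data(\tau(b))=data(\tau(y))$. *)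

From mathcomp Require Import all_boot.
Set Implicit Arguments. Unset Strict Implicit. Unset Printing Implicit Defensive.

Inductive mop := OpR | OpW.
Definition mop_eqb (a b : mop) : bool :=
  match a, b with OpR, OpR | OpW, OpW => true | _, _ => false end.

Record mevent := MEv { op : mop; proc : nat; loc : nat; data : nat }.

Definition in_E (n m v : nat) (e : mevent) : bool :=
  [&& 1 <= proc e <= n, 1 <= loc e <= m & data e <= v].

Inductive letter (I : Type) := Mem of mevent | Int of I.
Arguments Mem {I}. Arguments Int {I}.

Definition letter_ok (I : Type) (n m v : nat) (l : letter I) : bool :=
  match l with Mem e => in_E n m v e | Int _ => true end.

Record dfa (A : Type) := Dfa {
  dfa_state : finType;
  dfa_start : dfa_state;
  dfa_step : dfa_state -> A -> dfa_state;
  dfa_final : pred dfa_state }.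

Definition dfa_accepts (A : Type) (D : dfa A) (w : seq A) : bool :=
  @dfa_final A D (foldl (@dfa_step A D) (@dfa_start A D) w).

Definition regular_over (A : Type) (ok : pred A) (L : seq A -> Prop) : Prop :=
  exists D : dfa A, forall w, L w <-> (all ok w && dfa_accepts D w).

Definition memory_system (Iint : nat -> nat -> nat -> finType)
  (S : forall n m v, seq (letter (Iint n m v)) -> Prop) : Prop :=
  forall n m v, 1 <= n -> 1 <= m -> 1 <= v ->
    regular_over (letter_ok n m v) (S n m v).

Definition trace_of (I : Type) (r : seq (letter I)) : seq mevent :=
  pmap (fun l => match l with Mem e => Some e | Int _ => None end) r.

Definition is_trace (Iint : nat -> nat -> nat -> finType)
  (S : forall n m v, seq (letter (Iint n m v)) -> Prop)
  (n m v : nat) (tau : seq mevent) : Prop :=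
  exists r, S n m v r /\ trace_of r = tau.

(* Positions of a trace are 0-based indices k < size tau; tau(k) = nth. *)
Definition ev0 : mevent := MEv OpR 0 0 0.
Definition tnth (tau : seq mevent) (k : nat) : mevent := nth ev0 tau k.

Definition inL (tau : seq mevent) (j k : nat) : Prop :=
  k < size tau /\ loc (tnth tau k) = j.
Definition inLw (tau : seq mevent) (j k : nat) : Prop :=
  inL tau j k /\ op (tnth tau k) = OpW.
Definition inLr (tau : seq mevent) (j k : nat) : Prop :=
  inL tau j k /\ op (tnth tau k) = OpR.

Definition unambiguous (tau : seq mevent) : Prop :=
  forall j x, inLw tau j x ->
    data (tnth tau x) <> 0 /\
    (forall y, inLw tau j y -> y <> x -> data (tnth tau x) <> data (tnth tau y)).

Definition causality (Iint : nat -> nat -> nat -> finType)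
  (S : forall n m v, seq (letter (Iint n m v)) -> Prop) : Prop :=
  forall n m v, 1 <= n -> 1 <= m -> 1 <= v ->
  forall tau, is_trace S n m v tau ->
  forall j x, inLr tau j x ->
    data (tnth tau x) = 0 \/
    exists y, inLw tau j y /\ data (tnth tau x) = data (tnth tau y).

Definition strict_total_on (P : nat -> Prop) (rel : nat -> nat -> Prop) : Prop :=
  (forall x y, rel x y -> P x /\ P y) /\
  (forall x, ~ rel x x) /\
  (forall x y z, rel x y -> rel y z -> rel x z) /\
  (forall x y, P x -> P y -> x <> y -> rel x y \/ rel y x).

Definition witness (Iint : nat -> nat -> nat -> finType)
  (S : forall n m v, seq (letter (Iint n m v)) -> Prop) (n m v : nat)
  (Omega : seq mevent -> nat -> nat -> nat -> Prop) : Prop :=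
  forall tau, is_trace S n m v tau ->
  forall j, 1 <= j <= m -> strict_total_on (inLw tau j) (Omega tau j).

Definition Omega_e (Omega : seq mevent -> nat -> nat -> nat -> Prop)
  (tau : seq mevent) (j x y : nat) : Prop :=
  inL tau j x /\ inL tau j y /\
  ( (data (tnth tau x) = data (tnth tau y) /\
       op (tnth tau x) = OpW /\ op (tnth tau y) = OpR)
    \/ (data (tnth tau x) = 0 /\ data (tnth tau y) <> 0)
    \/ (exists a b, inLw tau j a /\ inLw tau j b /\ Omega tau j a b /\
          data (tnth tau a) = data (tnth tau x) /\
          data (tnth tau b) = data (tnth tau y)) ).

From Pilot Require Import Defs.
From mathcomp Require Import all_boot.

Set Implicit Arguments.
Unset Strict Implicit.
Unset Printing Implicit Defensive.

(* Omega^e compares events only through their data.  If t carries the initial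
   value 0 it precedes s, whose data is that of some write and hence nonzero.
   Otherwise causality yields a write w carrying the data of t, and comparing
   w in the total order Omega with the write that carries the data of r puts
   t either after r or before s. *)

Lemma strict_total_split (P : nat -> Prop) (R : nat -> nat -> Prop) a b w :
  strict_total_on P R -> R a b -> P w -> R a w \/ R w b.
Proof.
move=> [dom [_ [trans total]]] Rab Pw.
have [Pa _] := dom a b Rab.
case: (eqVneq w a) => [-> | /eqP neq_wa]; first by right.
case: (total a w Pa Pw (nesym neq_wa)) => [Raw | Rwa]; first by left.
by right; apply: trans Rwa Rab.
Qed.

Section ExtendedOrder.

Variables (Omega : seq mevent -> nat -> nat -> nat -> Prop) (tau : seq mevent) (j : nat).

Local Notation dat x := (data (Defs.tnth tau x)).
Local Notation opr x := (op (Defs.tnth tau x)).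
Local Notation Oe := (Omega_e Omega tau j).

Lemma Omega_e_of_read_from x y : inL tau j x -> inL tau j y ->
  dat x = dat y -> opr x = OpW -> opr y = OpR -> Oe x y.
Proof. by move=> hx hy *; do 2 split=> //; left. Qed.

Lemma Omega_e_of_init x y : inL tau j x -> inL tau j y ->
  dat x = 0 -> dat y <> 0 -> Oe x y.
Proof. by move=> hx hy *; do 2 split=> //; right; left. Qed.

Lemma Omega_e_of_order x y a b : inL tau j x -> inL tau j y ->
  inLw tau j a -> inLw tau j b -> Omega tau j a b ->
  dat a = dat x -> dat b = dat y -> Oe x y.
Proof. by move=> hx hy *; do 2 split=> //; right; right; exists a, b. Qed.

Lemma write_with_same_data (Iint : nat -> nat -> nat -> finType)
    (S : forall n m v, seq (letter (Iint n m v)) -> Prop) n m v t :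
  causality S -> 1 <= n -> 1 <= m -> 1 <= v -> is_trace S n m v tau ->
  inL tau j t -> dat t <> 0 -> exists w, inLw tau j w /\ dat w = dat t.
Proof.
move=> caus hn hm hv trace_tau ht nz_t.
case op_t: (opr t); last by exists t.
have := caus n m v hn hm hv tau trace_tau j t (conj ht op_t).
case=> [zero_t | [w [hw Etw]]]; first by case: nz_t.
by exists w; split; last symmetry.
Qed.

Hypothesis unamb : unambiguous tau.

Lemma write_data_nonzero w : inLw tau j w -> dat w <> 0.
Proof. by move=> hw; case: (unamb hw). Qed.

Lemma Omega_e_data_nonzero x y : Oe x y -> dat y <> 0.
Proof.
case=> hx [_ [[Exy [Wx _]] | [[_ nz_y] | [a [b [_ [hb [_ [_ <-]]]]]]]]] //.
- by rewrite -Exy; apply: write_data_nonzero (conj hx Wx).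
- exact: write_data_nonzero.
Qed.

Hypothesis order : strict_total_on (inLw tau j) (Omega tau j).

Lemma Omega_e_split_by_write r s t w : Oe r s -> inL tau j t ->
  inLw tau j w -> dat w = dat t -> Oe r t \/ Oe t s.
Proof.
move=> [hr [hs rs]] ht hw Ewt.
case: rs => [[Ers [Wr Rs]] | [[zero_r _] | [a [b [ha [hb [Oab [Ear Ebs]]]]]]]].
- case: (eqVneq w r) => [Ewr | /eqP neq_wr].
  + rewrite Ewr in Ewt; case op_t: (opr t).
    * by left; apply: Omega_e_of_read_from.
    * by right; apply: Omega_e_of_read_from; rewrite // -Ewt.
  + have hrw : inLw tau j r by [].
    have [_ [_ [_ total]]] := order.
    case: (total r w hrw hw (nesym neq_wr)) => [Orw | Owr].
    * by left; apply: (Omega_e_of_order hr ht hrw hw Orw).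
    * by right; apply: (Omega_e_of_order ht hs hw hrw Owr).
- left; apply: Omega_e_of_init => //.
  by rewrite -Ewt; apply: write_data_nonzero.
- case: (strict_total_split order Oab hw) => [Oaw | Owb].
  + by left; apply: (Omega_e_of_order hr ht ha hw Oaw).
  + by right; apply: (Omega_e_of_order ht hs hw hb Owb).
Qed.

End ExtendedOrder.

Theorem lemma5p1 (Iint : nat -> nat -> nat -> finType)
  (S : forall n m v, seq (letter (Iint n m v)) -> Prop)
  (HS : memory_system S) (Hcaus : causality S)
  (n m v : nat) (hn : 1 <= n) (hm : 1 <= m) (hv : 1 <= v)
  (Omega : seq mevent -> nat -> nat -> nat -> Prop)
  (HOm : witness S n m v Omega)
  (tau : seq mevent) (Htau : is_trace S n m v tau) (Hun : unambiguous tau)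
  (i : nat) (hi : 1 <= i <= m) (r s t : nat)
  (hr : inL tau i r) (hs : inL tau i s) (ht : inL tau i t) :
  Omega_e Omega tau i r s ->
  Omega_e Omega tau i r t \/ Omega_e Omega tau i t s.
Proof.
move=> Ors.
have order := HOm tau Htau i hi.
case: (eqVneq (data (Defs.tnth tau t)) 0) => [zero_t | /eqP nz_t].
  by right; apply: Omega_e_of_init => //; apply: Omega_e_data_nonzero Ors.
have [w [hw Ewt]] := write_with_same_data Hcaus hn hm hv Htau ht nz_t.
exact: (Omega_e_split_by_write Hun order Ors ht hw Ewt).
Qed.
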